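(* Assume $0<q_{00}$ and that $M=V\Lambda V^{-1}$ with $\Lambda=\mathrm{diag}(\lambda_0,\dots,\lambda_r)$, all $\lambda_x\neq 0$, $\lambda_r=1$ and column $r$ of $V$ equal to $e_r$. Define $\alpha^0_x=\frac{\lambda_x}{q_{00}}V_{0x}(V^{-1})_{x0}$ for $x\in\mathcal S$, and, if $\nu_0<1$, $\nu'=\frac{1}{1-\nu_0}(0,\nu_1,\dots,\nu_r)^{\mathrm T}$ and $\alpha^1_x=\frac{\lambda_x}{q_{00}}V_{0x}\sum_{z\in\mathcal S}(V^{-1})_{xz}\nu'_z$. Then $\alpha^0_r=\alpha^1_r=0$ and $$\sum_{x\in\mathcal S}\alpha^0_x=1,\qquad \sum_{x\in\mathcal S}\frac{\alpha^0_x}{\lambda_x}=\frac1{q_{00}},\qquad 0\le q_{00}\sum_{x\in\mathcal S}\alpha^1_x\le 1,\qquad \sum_{x\in\mathcal S}\frac{\alpha^1_x}{\lambda_x}=0.$$ Moreover $\alpha_x=\nu_0\alpha^0_x+(1-\nu_0)\alpha^1_x$, where $\alpha_x=V_{0x}\frac{\lambda_x}{q_{00}}\sum_z(V^{-1})_{xz}\nu_z$.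
   Context: Fix $r\ge1$ and $\mathcal S=\{0,1,\dots,r\}$. Let $q_{xz}\in[0,1]$ for $x\in\mathcal S$, $z\in\{0,\dots,r-1\}$, with $\sum_x q_{xz}=1$ for each such $z$. Define column-stochastic matrices $M^{\ell}$, $M^{s}$ indexed by $\mathcal S$: column $0$ of $M^\ell$ is $e_0$, column $r$ of $M^\ell$ is $e_r$, $M^\ell_{xz}=q_{xz}$ for $1\le z\le r-1$; column $0$ of $M^s$ is $(q_{00},\dots,q_{r0})^{\mathrm T}$ and $M^s_{xz}=\delta_{xz}$ for $z\ge1$. Set $M=M^sM^\ell$. $\nu=(\nu_0,\dots,\nu_r)$ is a probability vector on $\mathcal S$; $e_x$ denotes the $x$-th standard basis vector. *)

From HB Require Import structures.
From mathcomp Require Import all_boot all_order all_algebra.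
Set Implicit Arguments. Unset Strict Implicit. Unset Printing Implicit Defensive.
Import Order.TTheory GRing.Theory Num.Theory.
Local Open Scope ring_scope.

(* The family q_{xz} is stored as a
   matrix q : 'M_(r.+1); only the columns z with z < r (i.e. z in 0..r-1)
   are meaningful, column r is ignored by every definition below. *)

Section Defs.
Variables (R : numFieldType) (r : nat).

Definition Mell (q : 'M[R]_(r.+1)) : 'M[R]_(r.+1) :=
  \matrix_(x, z) if (val z == 0)%N then (val x == 0)%:R
                 else if (val z == r)%N then (val x == r)%:R
                 else q x z.

Definition Mess (q : 'M[R]_(r.+1)) : 'M[R]_(r.+1) :=
  \matrix_(x, z) if (val z == 0)%N then q x ord0 else (x == z)%:R.

Definition Mfull (q : 'M[R]_(r.+1)) : 'M[R]_(r.+1) := Mess q *m Mell q.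

Definition Lam (lam : 'I_(r.+1) -> R) : 'M[R]_(r.+1) := diag_mx (\row_x lam x).

Definition alpha0 (q : 'M[R]_(r.+1)) (V : 'M[R]_(r.+1)) (lam : 'I_(r.+1) -> R)
  (x : 'I_(r.+1)) : R :=
  lam x / q ord0 ord0 * V ord0 x * (invmx V) x ord0.

Definition nuprime (nu : 'I_(r.+1) -> R) (z : 'I_(r.+1)) : R :=
  (1 - nu ord0)^-1 * (if (val z == 0)%N then 0 else nu z).

Definition alpha1 (q : 'M[R]_(r.+1)) (V : 'M[R]_(r.+1)) (lam : 'I_(r.+1) -> R)
  (nu : 'I_(r.+1) -> R) (x : 'I_(r.+1)) : R :=
  lam x / q ord0 ord0 * V ord0 x * \sum_z (invmx V) x z * nuprime nu z.

Definition alpha (q : 'M[R]_(r.+1)) (V : 'M[R]_(r.+1)) (lam : 'I_(r.+1) -> R)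
  (nu : 'I_(r.+1) -> R) (x : 'I_(r.+1)) : R :=
  V ord0 x * (lam x / q ord0 ord0) * \sum_z (invmx V) x z * nu z.

End Defs.

From HB Require Import structures.
From mathcomp Require Import all_boot all_order all_algebra.
From mathcomp Require Import ring.
Set Implicit Arguments. Unset Strict Implicit. Unset Printing Implicit Defensive.
Import Order.TTheory GRing.Theory Num.Theory.
Local Open Scope ring_scope.

(* All four alpha-vectors are one linear functional c |-> alpha^c applied to
   c = e_0, nu', nu.  Summed over x, the factor V_{0x} lambda_x (V^{-1})_{xz}
   collapses to M_{0z} = q_00 M^l_{0z}; divided by lambda_x first, it collapses
   to (V V^{-1})_{0z} = [z = 0].  Hence sum alpha^c = sum_z M^l_{0z} c_z, a
   convex combination of numbers in [0,1] when c is a probability vector, and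
   sum alpha^c / lambda = c_0 / q_00, which vanishes for c = nu'. *)

Lemma sum_mulmx_mulr (R : comPzRingType) n (B C : 'M[R]_n) i (c : 'I_n -> R) :
  \sum_z (B *m C) i z * c z = \sum_x B i x * \sum_z C x z * c z.
Proof.
under eq_bigr do rewrite mxE mulr_suml.
rewrite exchange_big; apply: eq_bigr => x _; rewrite mulr_sumr.
by apply: eq_bigr => z _; rewrite mulrA.
Qed.

Lemma sum_mulr_delta (R : pzSemiRingType) n (c : 'I_n -> R) (j : 'I_n) :
  \sum_z c z * (z == j)%:R = c j.
Proof. by under eq_bigr do rewrite mulr_natr mulrb; rewrite -big_mkcond big_pred1_eq. Qed.

Lemma convex_comb_in01 (R : numDomainType) (I : finType) (a p : I -> R) :
  (forall i, 0 <= a i <= 1) -> (forall i, 0 <= p i) -> \sum_i p i = 1 ->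
  0 <= \sum_i a i * p i <= 1.
Proof.
move=> a01 p_ge0 p_sum1; apply/andP; split.
  by apply: sumr_ge0 => i _; rewrite mulr_ge0 // (andP (a01 i)).1.
by rewrite -[leRHS]p_sum1; apply: ler_sum => i _; rewrite ler_piMl // (andP (a01 i)).2.
Qed.

Section Nuprime.
Variables (R : numFieldType) (r : nat) (nu : 'I_r.+1 -> R).
Hypotheses (nu_ge0 : forall x, 0 <= nu x) (nu_sum1 : \sum_x nu x = 1)
  (nu0_lt1 : nu ord0 < 1).

Lemma nuprime0 : nuprime nu ord0 = 0.
Proof. by rewrite /nuprime /= mulr0. Qed.

Lemma nuprime_ge0 z : 0 <= nuprime nu z.
Proof.
rewrite /nuprime mulr_ge0 //; last by case: ifP.
by rewrite invr_ge0 subr_ge0 ltW.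
Qed.

Lemma sum_nuprime : \sum_z nuprime nu z = 1.
Proof.
rewrite /nuprime -mulr_sumr (bigD1 ord0) //= add0r.
rewrite (eq_bigr nu) => [|z /negbTE z_neq0]; last by rewrite -val_eqE /= in z_neq0; rewrite z_neq0.
have -> : \sum_(z | z != ord0) nu z = 1 - nu ord0.
  by rewrite -nu_sum1 [in RHS](bigD1 ord0) //= addrC addrK.
by rewrite mulVf // subr_eq0 eq_sym lt_eqF.
Qed.

Lemma nu_decomp z : nu z = nu ord0 * (z == ord0)%:R + (1 - nu ord0) * nuprime nu z.
Proof.
have nu0_neq1 : 1 - nu ord0 != 0 by rewrite subr_eq0 eq_sym lt_eqF.
have [-> | z_neq0] := eqVneq z ord0; first by rewrite nuprime0 mulr1 mulr0 addr0.
rewrite /nuprime -val_eqE /= in z_neq0 *; rewrite (negbTE z_neq0) mulr0 add0r.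
by rewrite mulrA mulfV // mul1r.
Qed.

End Nuprime.

Lemma Mell_row0_in01 (R : numFieldType) (r : nat) (q : 'M[R]_r.+1) :
  (forall x z : 'I_r.+1, (val z < r)%N -> 0 <= q x z <= 1) ->
  forall z, 0 <= Mell q ord0 z <= 1.
Proof.
move=> q01 z; rewrite /Mell mxE.
case: ifP => _; first by rewrite /= ler01 lexx.
case: ifP => z_neq_r; first by case: (_ == _)%N; rewrite /= ?lexx ?ler01.
by apply: q01; rewrite ltn_neqAle z_neq_r -ltnS ltn_ord.
Qed.

Lemma Mfull_row0 (R : numFieldType) (r : nat) (q : 'M[R]_r.+1) z :
  Mfull q ord0 z = q ord0 ord0 * Mell q ord0 z.
Proof.
rewrite /Mfull mxE (bigD1 ord0) //= big1 ?addr0; first by rewrite /Mess mxE eqxx.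
move=> y y_neq0; rewrite /Mess mxE [ord0 == y]eq_sym (negbTE y_neq0).
by move: y_neq0; rewrite -val_eqE /= => /negbTE ->; rewrite mul0r.
Qed.

Section SpectralWeight.
Variables (R : numFieldType) (r : nat) (q V : 'M[R]_r.+1) (lam : 'I_r.+1 -> R).
Hypotheses (q00_neq0 : q ord0 ord0 != 0) (V_unit : V \in unitmx)
  (M_diag : Mfull q = V *m Lam lam *m invmx V) (lam_neq0 : forall x, lam x != 0).

Definition spectral_weight (c : 'I_r.+1 -> R) (x : 'I_r.+1) : R :=
  lam x / q ord0 ord0 * V ord0 x * \sum_z invmx V x z * c z.

Lemma spectral_weightD a b c d x :
  spectral_weight (fun z => a * c z + b * d z) x
  = a * spectral_weight c x + b * spectral_weight d x.
Proof.
rewrite /spectral_weight.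
under eq_bigr do rewrite mulrDr mulrCA [_ * (b * _)]mulrCA.
rewrite big_split -!mulr_sumr /=; ring.
Qed.

Lemma sum_spectral_weight c :
  \sum_x spectral_weight c x = \sum_z Mell q ord0 z * c z.
Proof.
have -> : \sum_z Mell q ord0 z * c z = (q ord0 ord0)^-1 * \sum_z Mfull q ord0 z * c z.
  by rewrite mulr_sumr; apply: eq_bigr => z _; rewrite Mfull_row0 mulrA mulKf.
rewrite M_diag sum_mulmx_mulr mulr_sumr; apply: eq_bigr => x _.
rewrite /Lam mul_mx_diag !mxE /spectral_weight; ring.
Qed.

Lemma sum_spectral_weight_div c :
  \sum_x spectral_weight c x / lam x = c ord0 / q ord0 ord0.
Proof.
have VW1 : \sum_x V ord0 x * \sum_z invmx V x z * c z = c ord0.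
  rewrite -sum_mulmx_mulr mulmxV //.
  by under eq_bigr do rewrite mxE eq_sym mulrnAl mul1r -mulr_natl mulrC; rewrite sum_mulr_delta.
rewrite mulrC -VW1 mulr_sumr; apply: eq_bigr => x _.
by rewrite /spectral_weight; field; rewrite lam_neq0 q00_neq0.
Qed.

End SpectralWeight.

Theorem mainTheorem4 (R : numFieldType) (r : nat) (hr : (1 <= r)%N)
  (q : 'M[R]_(r.+1))
  (hq01 : forall (x z : 'I_(r.+1)), (val z < r)%N -> 0 <= q x z <= 1)
  (hqsum : forall z : 'I_(r.+1), (val z < r)%N -> \sum_x q x z = 1)
  (nu : 'I_(r.+1) -> R)
  (hnu0 : forall x, 0 <= nu x) (hnu1 : \sum_x nu x = 1)
  (V : 'M[R]_(r.+1)) (lam : 'I_(r.+1) -> R)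
  (hq00 : 0 < q ord0 ord0)
  (hV : V \in unitmx)
  (hM : Mfull q = V *m Lam lam *m invmx V)
  (hlam : forall x, lam x != 0)
  (hlamr : lam ord_max = 1)
  (hVr : forall i : 'I_(r.+1), V i ord_max = (i == ord_max)%:R) :
  [/\ alpha0 q V lam ord_max = 0,
      \sum_x alpha0 q V lam x = 1,
      \sum_x alpha0 q V lam x / lam x = (q ord0 ord0)^-1 &
      (nu ord0 < 1 ->
       [/\ alpha1 q V lam nu ord_max = 0,
           0 <= q ord0 ord0 * \sum_x alpha1 q V lam nu x <= 1,
           \sum_x alpha1 q V lam nu x / lam x = 0 &
           forall x, alpha q V lam nu x
                     = nu ord0 * alpha0 q V lam x
                       + (1 - nu ord0) * alpha1 q V lam nu x])].
Proof.
have q00_neq0 : q ord0 ord0 != 0 by rewrite gt_eqF.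
have V0r : V ord0 ord_max = 0 by rewrite hVr -val_eqE /= eq_sym gtn_eqF.
set e0 := fun z : 'I_r.+1 => (z == ord0)%:R : R.
have alpha0E : alpha0 q V lam =1 spectral_weight q V lam e0.
  by move=> x; rewrite /spectral_weight sum_mulr_delta.
have Mell00 : Mell q ord0 ord0 = 1 by rewrite /Mell mxE.
split.
- by rewrite /alpha0 V0r mulr0 mul0r.
- by under eq_bigr do rewrite alpha0E; rewrite sum_spectral_weight // sum_mulr_delta Mell00.
- under eq_bigr do rewrite alpha0E.
  by rewrite sum_spectral_weight_div // /e0 eqxx mul1r.
move=> nu0_lt1.
have alpha1E : alpha1 q V lam nu = spectral_weight q V lam (nuprime nu) by [].
have [S_ge0 S_le1] := andP (convex_comb_in01 (Mell_row0_in01 hq01)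
  (nuprime_ge0 hnu0 nu0_lt1) (sum_nuprime hnu1 nu0_lt1)).
have [q00_ge0 q00_le1] := andP (hq01 ord0 ord0 hr).
split.
- by rewrite /alpha1 V0r mulr0 mul0r.
- by rewrite alpha1E sum_spectral_weight // mulr_ge0 // mulr_ile1.
- by rewrite alpha1E sum_spectral_weight_div // nuprime0 mul0r.
move=> x; rewrite alpha0E alpha1E -spectral_weightD /alpha /spectral_weight.
rewrite [V _ _ * _]mulrC; congr (_ * _); apply: eq_bigr => z _.
by rewrite -(nu_decomp nu0_lt1).
Qed.
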